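(* Let $Q$ be a finite acyclic quiver with an admissible ordering $v_1,\dots,v_k$ of its vertices. Then there are isomorphisms of quivers ${}_\infty Q\cong\mathbb{N}Q$, ${}_{-\infty}Q\cong-\mathbb{N}Q$ and ${}_\infty\underline{Q}\cong\mathbb{Z}Q$ (identifying the vertex $\tau^{-n}v$ with $(n,v)$).
   Context: The repetitive quiver $\mathbb{Z}Q$ has vertices $\mathbb{Z}\times Q_0$ and, for each arrow $\alpha:v\to w$ of $Q$ and $n\in\mathbb{Z}$, arrows $(n,v)\to(n,w)$ and $(n,w)\to(n+1,v)$; $\mathbb{N}Q$ and $-\mathbb{N}Q$ denote its full subquivers on the vertices $(n,v)$ with $n\ge0$, resp. $n\le0$. An ordering $v_1,\dots,v_k$ of $Q_0$ is admissible if each $v_i$ is a source of the quiver obtained from $Q$ by reversing all arrows at $v_1$, then at $v_2$, ..., then at $v_{i-1}$. For a quiver $\Gamma$ and vertex $u$: $\Gamma^+(u)$ adds a new vertex $\tau^{-1}u$ and one arrow $w\to\tau^{-1}u$ for each arrow $u\to w$ of $\Gamma$; $\Gamma^-(u)$ adds a new vertex $\tau u$ and one arrow $\tau u\to w$ for each arrow $w\to u$; $\Gamma^\pm(u_1,\dots,u_m)$ means applying these successively. Define ${}_0Q={}_0\underline{Q}=Q$, ${}_nQ={}_{n-1}Q^+(\tau^{-n+1}v_1,\dots,\tau^{-n+1}v_k)$, ${}_{-n}Q={}_{-n+1}Q^-(\tau^{n-1}v_k,\dots,\tau^{n-1}v_1)$, ${}_n\underline{Q}={}_{n-1}\underline{Q}^+(\tau^{-n+1}v_1,\dots,\tau^{-n+1}v_k)^-(\tau^{n-1}v_k,\dots,\tau^{n-1}v_1)$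 (with $\tau^{-j}$, $\tau^{j}$ of a new vertex meaning the iterated new vertices), and ${}_\infty Q=\bigcup_n{}_nQ$, ${}_{-\infty}Q=\bigcup_n{}_{-n}Q$, ${}_\infty\underline{Q}=\bigcup_n{}_n\underline{Q}$. *)

From mathcomp Require Import all_boot all_order all_algebra.
Set Implicit Arguments. Unset Strict Implicit. Unset Printing Implicit Defensive.
Import Order.TTheory GRing.Theory Num.Theory.
Local Open Scope int_scope.

Section Quivers.
Variables (V A : finType) (s t : A -> V).

Definition acyclic : Prop :=
  forall p : seq A, cycle (fun a b => t a == s b) p -> p = [::].

Definition reverse_at (o : A -> V * V) (x : V) : A -> V * V :=
  fun a => if ((o a).1 == x) || ((o a).2 == x) then ((o a).2, (o a).1) else o a.

Definition reverse_seq (us : seq V) : A -> V * V :=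
  foldl reverse_at (fun a => (s a, t a)) us.

Definition admissible (vs : seq V) : Prop :=
  [/\ uniq vs, (forall v : V, v \in vs) &
      forall i, i < size vs ->
        forall a : A, (reverse_seq (take i vs) a).2 != nth (s a) vs i].

(* (n, v) stands for tau^{-n} v *)
Definition vtx := (int * V)%type.
Definition tauinv (x : vtx) : vtx := ((x.1 + 1)%R, x.2).
Definition tau (x : vtx) : vtx := ((x.1 - 1)%R, x.2).

Record quiverIn := QuiverIn {
  qvert : vtx -> Prop;
  qarr : Type;
  qsrc : qarr -> vtx;
  qtgt : qarr -> vtx }.

(* isomorphism of quivers which is the identity on (identified) vertices *)
Definition qiso (G H : quiverIn) : Prop :=
  (forall x, @qvert G x <-> @qvert H x) /\
  exists f : qarr G -> qarr H, bijective f /\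
    forall a, @qsrc H (f a) = @qsrc G a /\ @qtgt H (f a) = @qtgt G a.

(* ---------- finite stages: vertex list and arrow list (arrow i = i-th pair) ---------- *)
Record stage := Stage { sverts : seq vtx; sarrs : seq (vtx * vtx) }.

Definition Q0stage : stage :=
  Stage [seq ((0%:Z), v) | v <- enum V] [seq (((0%:Z), s a), ((0%:Z), t a)) | a <- enum A].

Definition plus1 (G : stage) (u : vtx) : stage :=
  Stage (rcons (sverts G) (tauinv u))
        (sarrs G ++ [seq (e.2, tauinv u) | e <- sarrs G & e.1 == u]).

Definition minus1 (G : stage) (u : vtx) : stage :=
  Stage (rcons (sverts G) (tau u))
        (sarrs G ++ [seq (tau u, e.1) | e <- sarrs G & e.2 == u]).

Definition plusL (G : stage) (us : seq vtx) := foldl plus1 G us.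
Definition minusL (G : stage) (us : seq vtx) := foldl minus1 G us.

Definition layer (vs : seq V) (n : int) : seq vtx := [seq (n, v) | v <- vs].

Fixpoint posQ (vs : seq V) (n : nat) : stage :=
  if n is m.+1 then plusL (posQ vs m) (layer vs m%:Z) else Q0stage.

Fixpoint negQ (vs : seq V) (n : nat) : stage :=
  if n is m.+1 then minusL (negQ vs m) (layer (rev vs) (- m%:Z)%R) else Q0stage.

Fixpoint biQ (vs : seq V) (n : nat) : stage :=
  if n is m.+1 then
    minusL (plusL (biQ vs m) (layer vs m%:Z)) (layer (rev vs) (- m%:Z)%R)
  else Q0stage.

(* union of the increasing chain of stages (each stage extends the previous one;
   an arrow is identified by its position i together with its endpoints) *)
Definition unionQ (G : nat -> stage) : quiverIn :=
  @QuiverIn (fun x => exists n, x \in sverts (G n))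
            {p : nat * (vtx * vtx) | exists n, onth (sarrs (G n)) p.1 = Some p.2}
            (fun p => (sval p).2.1) (fun p => (sval p).2.2).

Definition infQ vs := unionQ (posQ vs).
Definition minfQ vs := unionQ (negQ vs).
Definition infQu vs := unionQ (biQ vs).

(* arrows (n, a, false) : (n, s a) -> (n, t a);  (n, a, true) : (n, t a) -> (n+1, s a) *)
Definition ZQsrc (x : int * A * bool) : vtx :=
  if x.2 then (x.1.1, t x.1.2) else (x.1.1, s x.1.2).
Definition ZQtgt (x : int * A * bool) : vtx :=
  if x.2 then ((x.1.1 + 1)%R, s x.1.2) else (x.1.1, t x.1.2).

Definition fullZQ (P : int -> Prop) : quiverIn :=
  @QuiverIn (fun x => P x.1)
            {x : int * A * bool | P (ZQsrc x).1 /\ P (ZQtgt x).1}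
            (fun x => ZQsrc (sval x)) (fun x => ZQtgt (sval x)).

Definition ZQ := fullZQ (fun _ => True).
Definition NQ := fullZQ (fun n => (0 <= n)%R).
Definition mNQ := fullZQ (fun n => (n <= 0)%R).

End Quivers.

(* The arrows of ZQ are labelled by triples (n, a, b), and the semitranslation
   [semitrans] maps an arrow x -> y to an arrow tau y -> x.  The step Gamma^+(u)
   adds the vertex tau^-1 u together with the images under [semitrans_inv] of the
   arrows of Gamma out of u; dually Gamma^-(u) adds tau u and the [semitrans]-images
   of the arrows into u.  Tracking the ZQ-labels of the arrows of each stage, if
   Gamma is the full subquiver of ZQ on a vertex set X, then Gamma^+(u) is the full
   subquiver on X + {tau^-1 u} as soon as every arrow into tau^-1 u starts in X and
   no arrow out of tau^-1 u ends in X (dually for Gamma^-).  Admissibility forces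
   index (s a) < index (t a) for every arrow a, and this is exactly what makes
   these conditions hold when the layer tau^-n v_1, ..., tau^-n v_k is added
   in this order (and the layer tau^n v_k, ..., tau^n v_1 for Gamma^-).  Hence
   _nQ, _{-n}Q and _n\underline{Q} are the full subquivers on the levels [0, n],
   [-n, 0] and [-n, n], and their unions are NQ, -NQ and ZQ. *)

From mathcomp Require Import all_boot all_order all_algebra.
From mathcomp Require Import zify.
From Stdlib Require Import ProofIrrelevance.
Set Implicit Arguments. Unset Strict Implicit. Unset Printing Implicit Defensive.
Import Order.TTheory GRing.Theory Num.Theory.
Local Open Scope ring_scope.

Lemma index_rev (T : eqType) (x : T) (ws : seq T) : uniq ws -> x \in ws ->
  index x (rev ws) = (size ws - (index x ws).+1)%N.
Proof.
move=> uws xws; have hx : (index x ws < size ws)%N by rewrite index_mem.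
set j := (size ws - (index x ws).+1)%N.
have hj : (j < size ws)%N by rewrite /j; lia.
have nj : nth x (rev ws) j = x.
  rewrite nth_rev // (_ : size ws - j.+1 = index x ws)%N ?nth_index //.
  by rewrite /j; lia.
by rewrite -{1}nj index_uniq ?rev_uniq ?size_rev.
Qed.

Lemma mem_prefix_index (T : eqType) (P rest ws : seq T) (v w : T) :
  P ++ v :: rest = ws -> v \notin P -> (w \in P) = (index w ws < index v ws)%N.
Proof.
move=> <- vP; rewrite !index_cat (negbTE vP) /= eqxx addn0.
by case: ifP => wP; [rewrite index_mem | rewrite ltnNge leq_addr].
Qed.

Lemma onth_index (T : eqType) (x : T) (l : seq T) : x \in l -> onth l (index x l) = Some x.
Proof. by elim: l => //= y l IH; rewrite inE eq_sym; case: eqP => [->|_] //=. Qed.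

Lemma index_onth (T : eqType) (l : seq T) i x : uniq l -> onth l i = Some x -> index x l = i.
Proof. by move=> ul hi; rewrite -(onth_nth x _ _ _ hi) index_uniq // -onthTE hi. Qed.

Lemma onth_prefix (T : eqType) (l1 l2 : seq T) i x :
  prefix l1 l2 -> onth l1 i = Some x -> onth l2 i = Some x.
Proof. by case/prefixP=> r -> hi; rewrite onth_cat -onthTE hi. Qed.

Lemma prefix_foldl (T U : eqType) (f : seq T -> U -> seq T) (l : seq T) (us : seq U) :
  (forall l u, prefix l (f l u)) -> prefix l (foldl f l us).
Proof.
move=> hf; elim: us l => [|u us IH] l /=; first exact: prefix_refl.
exact: prefix_trans (hf l u) (IH _).
Qed.

Section Admissible.
Variables (V A : finType) (s t : A -> V).

Lemma foldl_reverse_at_id (o : A -> V * V) (us : seq V) (a : A) :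
  (o a).1 \notin us -> (o a).2 \notin us -> foldl (@reverse_at V A) o us a = o a.
Proof.
elim: us o => //= x us IH o; rewrite !inE !negb_or => /andP[s1 s2] /andP[t1 t2].
by rewrite IH /reverse_at (negbTE s1) (negbTE t1).
Qed.

Lemma admissible_index_lt (vs : seq V) (a : A) :
  admissible s t vs -> (index (s a) vs < index (t a) vs)%N.
Proof.
case=> _ allv hsrc; set i := index (t a) vs.
have hi : (i < size vs)%N by rewrite index_mem.
apply: index_ltn; apply: contraT => hs.
have ht : t a \notin take i vs by apply/negP => /index_ltn; rewrite ltnn.
by move: (hsrc i hi a); rewrite /reverse_seq foldl_reverse_at_id //= nth_index ?eqxx.
Qed.

End Admissible.

Section ZQArrows.
Variables (V A : finType) (s t : A -> V).

Definition zqarr := (int * A * bool)%type.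

Definition ends (x : zqarr) : vtx V * vtx V := (ZQsrc s t x, ZQtgt s t x).

Definition semitrans (x : zqarr) : zqarr :=
  if x.2 then (x.1.1, x.1.2, false) else (x.1.1 - 1, x.1.2, true).
Definition semitrans_inv (x : zqarr) : zqarr :=
  if x.2 then (x.1.1 + 1, x.1.2, false) else (x.1.1, x.1.2, true).

Lemma semitransK : cancel semitrans semitrans_inv.
Proof. by case=> [[n a] []]; rewrite /semitrans /semitrans_inv //= subrK. Qed.
Lemma semitrans_invK : cancel semitrans_inv semitrans.
Proof. by case=> [[n a] []]; rewrite /semitrans /semitrans_inv //= addrK. Qed.

Lemma tauK : cancel (@tau V) (@tauinv V).
Proof. by case=> n v; rewrite /tau /tauinv /= subrK. Qed.
Lemma tauinvK : cancel (@tauinv V) (@tau V).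
Proof. by case=> n v; rewrite /tau /tauinv /= addrK. Qed.

Lemma src_semitrans x : ZQsrc s t (semitrans x) = tau (ZQtgt s t x).
Proof. by case: x => [[n a] []]; rewrite /tau //= addrK. Qed.
Lemma tgt_semitrans x : ZQtgt s t (semitrans x) = ZQsrc s t x.
Proof. by case: x => [[n a] []]; rewrite //= /ZQtgt /= subrK. Qed.
Lemma src_semitrans_inv x : ZQsrc s t (semitrans_inv x) = ZQtgt s t x.
Proof. by case: x => [[n a] []]. Qed.
Lemma tgt_semitrans_inv x : ZQtgt s t (semitrans_inv x) = tauinv (ZQsrc s t x).
Proof. by case: x => [[n a] []]. Qed.

Definition plus_labels (L : seq zqarr) (u : vtx V) : seq zqarr :=
  L ++ map semitrans_inv [seq x <- L | ZQsrc s t x == u].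
Definition minus_labels (L : seq zqarr) (u : vtx V) : seq zqarr :=
  L ++ map semitrans [seq x <- L | ZQtgt s t x == u].

Lemma prefix_plus_labels L u : prefix L (plus_labels L u).
Proof. exact: prefix_prefix. Qed.
Lemma prefix_minus_labels L u : prefix L (minus_labels L u).
Proof. exact: prefix_prefix. Qed.

Lemma sarrs_plus1 G L u : sarrs G = map ends L ->
  sarrs (plus1 G u) = map ends (plus_labels L u).
Proof.
move=> hG; rewrite /plus1 /plus_labels /= hG map_cat filter_map -!map_comp.
congr (_ ++ _); apply/eq_in_map => x; rewrite mem_filter => /andP[/eqP <- _].
by rewrite /ends /= src_semitrans_inv tgt_semitrans_inv.
Qed.

Lemma sarrs_minus1 G L u : sarrs G = map ends L ->
  sarrs (minus1 G u) = map ends (minus_labels L u).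
Proof.
move=> hG; rewrite /minus1 /minus_labels /= hG map_cat filter_map -!map_comp.
congr (_ ++ _); apply/eq_in_map => x; rewrite mem_filter => /andP[/eqP <- _].
by rewrite /ends /= src_semitrans tgt_semitrans.
Qed.

Definition inside (X : pred (vtx V)) : pred zqarr :=
  fun x => X (ZQsrc s t x) && X (ZQtgt s t x).

(* The i-th arrow of [G] is the arrow [L`_i] of ZQ. *)
Definition full_stage (G : stage V) (L : seq zqarr) (X : pred (vtx V)) : Prop :=
  [/\ sarrs G = map ends L, uniq L, sverts G =i X & L =i inside X].

Lemma full_stage_eq G L X Y : X =i Y -> full_stage G L X -> full_stage G L Y.
Proof.
move=> eXY [hG hu hV hL]; have eXY' y : X y = Y y := eXY y.
by split=> // [y | x]; rewrite ?hV ?eXY // hL /inside -!topredE /= !eXY'.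
Qed.

Lemma full_stage_plus1 G L X u :
  full_stage G L X -> X u -> ~~ X (tauinv u) ->
  (forall x, ZQtgt s t x = tauinv u -> X (ZQsrc s t x)) ->
  (forall x, ZQsrc s t x = tauinv u -> ~~ X (ZQtgt s t x)) ->
  full_stage (plus1 G u) (plus_labels L u) (predU X (pred1 (tauinv u))).
Proof.
case=> hG hu hV hL Xu Xw hin hout.
have mem_new x : (x \in map semitrans_inv [seq y <- L | ZQsrc s t y == u])
    = (ZQtgt s t x == tauinv u) && X (ZQsrc s t x).
  rewrite -{1}(semitransK x) (mem_map (can_inj semitrans_invK)) mem_filter hL.
  rewrite /inside -topredE /= src_semitrans tgt_semitrans.
  have -> : (tau (ZQtgt s t x) == u) = (ZQtgt s t x == tauinv u).
    by apply/eqP/eqP => [<-|->]; rewrite ?tauK ?tauinvK.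
  by case: eqP => // ->; rewrite tauinvK Xu.
split.
- exact: sarrs_plus1.
- rewrite cat_uniq hu map_inj_uniq ?filter_uniq ?andbT //=; last exact: can_inj semitrans_invK.
  apply/hasPn => x; rewrite mem_new hL /inside -topredE /= => /andP[/eqP -> _].
  by rewrite (negbTE Xw) andbF.
- by move=> y; rewrite /= mem_rcons in_cons hV orbC.
- move=> x; rewrite mem_cat hL mem_new /inside -!topredE /=.
  case: (eqVneq (ZQtgt s t x) (tauinv u)) => [e|_].
    by rewrite (hin _ e) e (negbTE Xw).
  case: (eqVneq (ZQsrc s t x) (tauinv u)) => [e|_]; last by rewrite !orbF.
  by rewrite e (negbTE Xw) (negbTE (hout _ e)).
Qed.

Lemma full_stage_minus1 G L X u :
  full_stage G L X -> X u -> ~~ X (tau u) ->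
  (forall x, ZQsrc s t x = tau u -> X (ZQtgt s t x)) ->
  (forall x, ZQtgt s t x = tau u -> ~~ X (ZQsrc s t x)) ->
  full_stage (minus1 G u) (minus_labels L u) (predU X (pred1 (tau u))).
Proof.
case=> hG hu hV hL Xu Xw hout hin.
have mem_new x : (x \in map semitrans [seq y <- L | ZQtgt s t y == u])
    = (ZQsrc s t x == tau u) && X (ZQtgt s t x).
  rewrite -{1}(semitrans_invK x) (mem_map (can_inj semitransK)) mem_filter hL.
  rewrite /inside -topredE /= src_semitrans_inv tgt_semitrans_inv.
  have -> : (tauinv (ZQsrc s t x) == u) = (ZQsrc s t x == tau u).
    by apply/eqP/eqP => [<-|->]; rewrite ?tauK ?tauinvK.
  by case: eqP => // ->; rewrite tauK Xu andbT.
split.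
- exact: sarrs_minus1.
- rewrite cat_uniq hu map_inj_uniq ?filter_uniq ?andbT //=; last exact: can_inj semitransK.
  apply/hasPn => x; rewrite mem_new hL /inside -topredE /= => /andP[/eqP -> _].
  by rewrite (negbTE Xw).
- by move=> y; rewrite /= mem_rcons in_cons hV orbC.
- move=> x; rewrite mem_cat hL mem_new /inside -!topredE /=.
  case: (eqVneq (ZQsrc s t x) (tau u)) => [e|_].
    by rewrite (hout _ e) e (negbTE Xw) orbT.
  case: (eqVneq (ZQtgt s t x) (tau u)) => [e|_]; last by rewrite !orbF.
  by rewrite e (negbTE Xw) (negbTE (hin _ e)) andbF.
Qed.

End ZQArrows.

Definition levels (V : finType) (lo hi : int) : pred (vtx V) :=
  fun y => (lo <= y.1) && (y.1 <= hi).
Definition partial_level (V : finType) (n : int) (P : seq V) : pred (vtx V) :=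
  fun y => (y.1 == n) && (y.2 \in P).

Section Layers.
Variables (V A : finType) (s t : A -> V) (vs : seq V).
Hypothesis hadm : admissible s t vs.

Lemma admissible_rev_index_lt (a : A) :
  (index (t a) (rev vs) < index (s a) (rev vs))%N.
Proof.
have [uvs allv _] := hadm; have := admissible_index_lt a hadm.
have := index_mem (t a) vs; rewrite allv !index_rev //; lia.
Qed.

Lemma full_stage_plus_prefix G L lo m P rest : lo <= m -> P ++ rest = vs ->
  full_stage s t G L (predU (levels lo m) (partial_level (m + 1) P)) ->
  full_stage s t (plusL G (layer rest m)) (foldl (plus_labels s t) L (layer rest m))
    (predU (levels lo m) (partial_level (m + 1) vs)).
Proof.
move=> hlo; have [uvs _ _] := hadm.
elim: rest P G L => [|v rest IH] P G L hP hG /=; first by rewrite cats0 in hP; rewrite -hP.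
have vP : v \notin P.
  by move: uvs; rewrite -hP cat_uniq /= negb_or => /and3P[_ /andP[]].
apply: IH (rcons P v) _ _ _ _; first by rewrite cat_rcons.
apply: full_stage_eq (full_stage_plus1 hG _ _ _ _) => [[n w]| | | |].
- rewrite -!topredE /= /levels /partial_level mem_rcons in_cons xpair_eqE /=.
  by case: (w == v); case: (w \in P); lia.
- by rewrite /= /levels /=; lia.
- by rewrite /= /levels /partial_level /= (negbTE vP) andbF orbF; lia.
- case=> [[n a] []] /=; rewrite /ZQsrc /ZQtgt /= /levels /partial_level /=.
    by case=> en _; lia.
  case=> en ea; rewrite (mem_prefix_index _ hP vP) -ea admissible_index_lt // en eqxx.
  by rewrite orbT.
- case=> [[n a] []] /=; rewrite /ZQsrc /ZQtgt /= /levels /partial_level /=.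
    by case=> en _; rewrite negb_or; apply/andP; split; lia.
  case=> en ea; rewrite (mem_prefix_index _ hP vP) -ea.
  by rewrite ltnNge ltnW ?admissible_index_lt // andbF orbF; lia.
Qed.

Lemma full_stage_plus_layer G L lo m : lo <= m -> full_stage s t G L (levels lo m) ->
  full_stage s t (plusL G (layer vs m)) (foldl (plus_labels s t) L (layer vs m))
    (levels lo (m + 1)).
Proof.
move=> hlo hG; have [_ allv _] := hadm.
apply: full_stage_eq (full_stage_plus_prefix (P := [::]) hlo erefl _) => [[n w]|].
  by rewrite -!topredE /= /levels /partial_level allv andbT /=; lia.
by apply: full_stage_eq hG => y; rewrite -!topredE /= /partial_level in_nil andbF orbF.
Qed.

Lemma full_stage_minus_prefix G L c hi R rest : c <= hi -> R ++ rest = rev vs ->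
  full_stage s t G L (predU (levels c hi) (partial_level (c - 1) R)) ->
  full_stage s t (minusL G (layer rest c)) (foldl (minus_labels s t) L (layer rest c))
    (predU (levels c hi) (partial_level (c - 1) (rev vs))).
Proof.
move=> hlo; have [uvs _ _] := hadm.
elim: rest R G L => [|v rest IH] R G L hR hG /=; first by rewrite cats0 in hR; rewrite -hR.
have vR : v \notin R.
  by move: uvs; rewrite -rev_uniq -hR cat_uniq /= negb_or => /and3P[_ /andP[]].
apply: IH (rcons R v) _ _ _ _; first by rewrite cat_rcons.
apply: full_stage_eq (full_stage_minus1 hG _ _ _ _) => [[n w]| | | |].
- rewrite -!topredE /= /levels /partial_level mem_rcons in_cons xpair_eqE /=.
  by case: (w == v); case: (w \in R); lia.
- by rewrite /= /levels /=; lia.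
- by rewrite /= /levels /partial_level /= (negbTE vR) andbF orbF; lia.
- case=> [[n a] []] /=; rewrite /ZQsrc /ZQtgt /= /levels /partial_level /=.
    by case=> en _; lia.
  case=> en ea; rewrite (mem_prefix_index _ hR vR) -ea admissible_rev_index_lt en eqxx.
  by rewrite orbT.
- case=> [[n a] []] /=; rewrite /ZQsrc /ZQtgt /= /levels /partial_level /=.
    by case=> en _; rewrite negb_or; apply/andP; split; lia.
  case=> en ea; rewrite (mem_prefix_index _ hR vR) -ea.
  by rewrite ltnNge ltnW ?admissible_rev_index_lt // andbF orbF; lia.
Qed.

Lemma full_stage_minus_layer G L c hi : c <= hi -> full_stage s t G L (levels c hi) ->
  full_stage s t (minusL G (layer (rev vs) c))
    (foldl (minus_labels s t) L (layer (rev vs) c)) (levels (c - 1) hi).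
Proof.
move=> hlo hG; have [_ allv _] := hadm.
apply: full_stage_eq (full_stage_minus_prefix (R := [::]) hlo erefl _) => [[n w]|].
  by rewrite -!topredE /= /levels /partial_level mem_rev allv andbT /=; lia.
by apply: full_stage_eq hG => y; rewrite -!topredE /= /partial_level in_nil andbF orbF.
Qed.

End Layers.

Section Stages.
Variables (V A : finType) (s t : A -> V) (vs : seq V).
Hypothesis hadm : admissible s t vs.

Definition base_labels : seq (zqarr A) := [seq (0, a, false) | a <- enum A].

Fixpoint pos_labels n :=
  if n is m.+1 then foldl (plus_labels s t) (pos_labels m) (layer vs m%:Z)
  else base_labels.
Fixpoint neg_labels n :=
  if n is m.+1 then foldl (minus_labels s t) (neg_labels m) (layer (rev vs) (- m%:Z))
  else base_labels.
Fixpoint bi_labels n :=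
  if n is m.+1 then
    foldl (minus_labels s t) (foldl (plus_labels s t) (bi_labels m) (layer vs m%:Z))
      (layer (rev vs) (- m%:Z))
  else base_labels.

Lemma full_stage_Q0 : full_stage s t (Q0stage s t) base_labels (levels 0 0).
Proof.
split.
- by rewrite /base_labels -map_comp.
- by rewrite map_inj_uniq ?enum_uniq // => a b [].
- case=> n v; apply/mapP/idP => [[w _ [-> _]] // | ].
  rewrite -topredE /levels => /= h; exists v; rewrite ?mem_enum //; congr pair; lia.
- case=> [[n a] b]; apply/mapP/idP => [[a0 _ [-> _ ->]] // | ].
  rewrite -topredE /inside /levels /ZQsrc /ZQtgt => /= h; exists a; rewrite ?mem_enum //.
  by case: b h => /= h; [lia | congr (_, _, _); lia].
Qed.

Lemma full_stage_posQ n : full_stage s t (posQ s t vs n) (pos_labels n) (levels 0 n%:Z).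
Proof.
elim: n => [|m IH] /=; first exact: full_stage_Q0.
apply: full_stage_eq (full_stage_plus_layer hadm _ IH) => [[k w]|]; last lia.
by rewrite -!topredE /levels /=; lia.
Qed.

Lemma full_stage_negQ n : full_stage s t (negQ s t vs n) (neg_labels n) (levels (- n%:Z) 0).
Proof.
elim: n => [|m IH] /=; first exact: full_stage_Q0.
apply: full_stage_eq (full_stage_minus_layer hadm _ IH) => [[k w]|]; last lia.
by rewrite -!topredE /levels /=; lia.
Qed.

Lemma full_stage_biQ n :
  full_stage s t (biQ s t vs n) (bi_labels n) (levels (- n%:Z) n%:Z).
Proof.
elim: n => [|m IH] /=; first exact: full_stage_Q0.
have hplus := full_stage_plus_layer hadm (_ : - m%:Z <= m%:Z) IH.
apply: full_stage_eq (full_stage_minus_layer hadm _ (hplus _)) => [[k w]| |]; try lia.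
by rewrite -!topredE /levels /=; lia.
Qed.

Lemma prefix_pos_labels n : prefix (pos_labels n) (pos_labels n.+1).
Proof. exact: prefix_foldl (@prefix_plus_labels _ _ s t). Qed.
Lemma prefix_neg_labels n : prefix (neg_labels n) (neg_labels n.+1).
Proof. exact: prefix_foldl (@prefix_minus_labels _ _ s t). Qed.
Lemma prefix_bi_labels n : prefix (bi_labels n) (bi_labels n.+1).
Proof.
apply: prefix_trans (prefix_foldl _ _ (@prefix_plus_labels _ _ s t)) _.
exact: prefix_foldl (@prefix_minus_labels _ _ s t).
Qed.

End Stages.

Section Union.
Variables (V A : finType) (s t : A -> V).
Variables (G : nat -> stage V) (L : nat -> seq (zqarr A)) (P : int -> Prop).
Hypothesis sarrsG : forall n, sarrs (G n) = map (ends s t) (L n).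
Hypothesis uniqL : forall n, uniq (L n).
Hypothesis prefixL : forall n, prefix (L n) (L n.+1).
Hypothesis vertsG : forall y, (exists n, y \in sverts (G n)) <-> P y.1.
Hypothesis labelsL :
  forall x, (exists n, x \in L n) <-> P (ZQsrc s t x).1 /\ P (ZQtgt s t x).1.

Lemma prefix_L_leq m n : (m <= n)%N -> prefix (L m) (L n).
Proof.
exact: (@homo_leq _ L (fun l1 l2 => prefix l1 l2) (@prefix_refl _) (@prefix_trans _) prefixL).
Qed.

Lemma onth_L_agree m n i x y : onth (L m) i = Some x -> onth (L n) i = Some y -> x = y.
Proof.
move=> hm hn; have := onth_prefix (prefix_L_leq (leq_maxl m n)) hm.
by rewrite (onth_prefix (prefix_L_leq (leq_maxr m n)) hn) => -[].
Qed.

Lemma index_L m n i x : onth (L m) i = Some x -> x \in L n -> index x (L n) = i.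
Proof.
move=> hm hn; have hk := onth_prefix (prefix_L_leq (leq_maxl m n)) hm.
have hk' := onth_prefix (prefix_L_leq (leq_maxr m n)) (onth_index hn).
by rewrite -(index_onth (uniqL _) hk') (index_onth (uniqL _) hk).
Qed.

Lemma union_arrow_labelled (p : qarr (unionQ G)) :
  exists nx : nat * zqarr A, onth (L nx.1) (sval p).1 == Some nx.2.
Proof.
case: p => [[i e] [n]] /=; rewrite sarrsG onth_map.
by case E: onth => [x|] //= _; exists (n, x); rewrite /= E.
Qed.

Definition union_label p := (xchoose (union_arrow_labelled p)).2.

Lemma onth_union_label p :
  onth (L (xchoose (union_arrow_labelled p)).1) (sval p).1 = Some (union_label p).
Proof. exact/eqP/(xchooseP (union_arrow_labelled p)). Qed.

Lemma ends_union_label p : ends s t (union_label p) = (sval p).2.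
Proof.
have [n] := proj2_sig p; rewrite sarrsG onth_map; case E: onth => [x|] //= [<-].
by rewrite (onth_L_agree (onth_union_label p) E).
Qed.

Lemma union_label_full p :
  P (ZQsrc s t (union_label p)).1 /\ P (ZQtgt s t (union_label p)).1.
Proof. by apply/labelsL; eexists; apply/onthP; eexists; exact: onth_union_label. Qed.

Definition to_full p : qarr (fullZQ s t P) := exist _ (union_label p) (union_label_full p).

Definition stage_of (y : qarr (fullZQ s t P)) : nat :=
  xchoose (proj2 (labelsL (sval y)) (proj2_sig y)).

Lemma mem_stage_of y : sval y \in L (stage_of y).
Proof. exact: (xchooseP (proj2 (labelsL (sval y)) (proj2_sig y))). Qed.

Lemma onth_stage_of y : exists n,
  onth (sarrs (G n)) (index (sval y) (L (stage_of y))) = Some (ends s t (sval y)).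
Proof. by exists (stage_of y); rewrite sarrsG onth_map onth_index ?mem_stage_of. Qed.

Definition of_full y : qarr (unionQ G) :=
  exist _ (index (sval y) (L (stage_of y)), ends s t (sval y)) (onth_stage_of y).

Lemma to_fullK : cancel to_full of_full.
Proof.
move=> p; apply: eq_sig_hprop => [q|]; first exact: proof_irrelevance.
rewrite /= ends_union_label [sval p]surjective_pairing; congr pair.
exact: index_L (onth_union_label p) (mem_stage_of (to_full p)).
Qed.

Lemma of_fullK : cancel of_full to_full.
Proof.
move=> y; apply: eq_sig_hprop => [q|]; first exact: proof_irrelevance.
exact: onth_L_agree (onth_union_label (of_full y)) (onth_index (mem_stage_of y)).
Qed.

Lemma unionQ_iso : qiso (unionQ G) (fullZQ s t P).
Proof.
split; first exact: vertsG.
exists to_full; split; first by exists of_full; [exact: to_fullK | exact: of_fullK].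
by move=> p; rewrite /= -ends_union_label.
Qed.

End Union.

Lemma unionQ_levels_iso (V A : finType) (s t : A -> V) (G : nat -> stage V)
    (L : nat -> seq (zqarr A)) (lo hi : nat -> int) (P : int -> Prop) :
  (forall n, full_stage s t (G n) (L n) (levels (lo n) (hi n))) ->
  (forall n, prefix (L n) (L n.+1)) ->
  (forall n, lo n.+1 <= lo n) -> (forall n, hi n <= hi n.+1) ->
  (forall k, P k <-> exists n, lo n <= k <= hi n) ->
  qiso (unionQ G) (fullZQ s t P).
Proof.
move=> hG hpre hlo hhi hP.
have lo_mono := homo_leq (r := fun x y => y <= x) (@lexx _ _)
  (fun y x z h1 h2 => le_trans h2 h1) hlo.
have hi_mono := homo_leq (@lexx _ _) (fun y x z => @le_trans _ _ y x z) hhi.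
apply: (@unionQ_iso _ _ s t G L P _ _ hpre) => [n | n | y | x]; try by case: (hG n).
- rewrite hP; split=> -[n hn]; exists n; by case: (hG n) => _ _ hV _; rewrite hV in hn *.
- split=> [[n] | [/hP[n1 h1] /hP[n2 h2]]].
    case: (hG n) => _ _ _ ->; rewrite /inside -topredE /= /levels => /andP[h1 h2].
    by split; apply/hP; exists n.
  exists (maxn n1 n2); case: (hG (maxn n1 n2)) => _ _ _ ->.
  rewrite /inside -topredE /= /levels.
  have := lo_mono _ _ (leq_maxl n1 n2); have := lo_mono _ _ (leq_maxr n1 n2).
  have := hi_mono _ _ (leq_maxl n1 n2); have := hi_mono _ _ (leq_maxr n1 n2).
  lia.
Qed.

Theorem proposition5p9 (V A : finType) (s t : A -> V) (vs : seq V) :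
  acyclic s t -> admissible s t vs ->
  [/\ qiso (infQ s t vs) (NQ s t),
      qiso (minfQ s t vs) (mNQ s t) &
      qiso (infQu s t vs) (ZQ s t)].
Proof.
move=> _ hadm; split.
- apply: (unionQ_levels_iso (full_stage_posQ hadm) (prefix_pos_labels s t vs))
    => [n | n | k]; try lia.
  by split=> [hk | [n]]; [exists (absz k) | ]; lia.
- apply: (unionQ_levels_iso (full_stage_negQ hadm) (prefix_neg_labels s t vs))
    => [n | n | k]; try lia.
  by split=> [hk | [n]]; [exists (absz k) | ]; lia.
- apply: (unionQ_levels_iso (full_stage_biQ hadm) (prefix_bi_labels s t vs))
    => [n | n | k]; try lia.
  by split=> // _; exists (absz k); lia.
Qed.
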